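(* Let $S$ be a finite relational signature and let $R$ be a relational Bayesian network (RBN) over $S$ that contains no combination functions, i.e. for each $r/k\in S$ its probability formula $F_r(X_1,\ldots,X_k)$ is built only from constants $q\in[0,1]$, atoms $s(Y_1,\ldots,Y_l)$ with $s/l\in S$ and each $Y_j\in\{X_1,\ldots,X_k\}$, and convex combinations $F_1\cdot F_2+(1-F_1)\cdot F_3$; and suppose $R$ is acyclic for every domain size. Then the family $\{Q^{(n)}\mid n\in\mathbb{N}\}$ of distributions defined by $R$ is a projective random relational structure model.
   Context: A relational signature $S$ is a set of relation symbols with arities, written $r/k$ ($k\geq 0$). For $n\in\mathbb{N}$ let $[n]=\{0,\ldots,n-1\}$ and let $\Omega^{(n)}$ be the set of all possible worlds for $S$ over domain $[n]$, i.e. truth assignments to all ground atoms $r(\mathbf{i})$ with $r/k\in S$, $\mathbf{i}\in[n]^k$. A random relational structure model (RRSM) is a family $\{Q^{(n)}\mid n\in\mathbb{N}\}$ with $Q^{(n)}$ a probability distribution on $\Omega^{(n)}$. $Q^{(n)}$ is exchangeable if $Q^{(n)}(\omega)=Q^{(n)}(\omega')$ whenever $\omega,\omega'$ are isomorphic. For $m\le n$, $Q^{(n)}\downarrow[m]$ denotes the marginal distribution of $Q^{(n)}$ on the ground atoms $r(\mathbf{i})$ with $\mathbf{i}\in[m]^k$ (identified with a distribution on $\Omega^{(m)}$). An RRSM is projective if every $Q^{(n)}$ is exchangeable and $Q^{(n)}\downarrow[m]=Q^{(m)}$ for all $m<n$. RBN semantics (combination-function-free fragment): an RBN assigns to each $r/k\in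 S$ a probability formula $F_r(X_1,\ldots,X_k)$ in distinct variables $X_1,\ldots,X_k$, built as described in the claim. For a domain $[n]$ and $\mathbf{i}\in[n]^k$, substituting $\mathbf{i}$ for $(X_1,\ldots,X_k)$ gives a ground formula $F_r(\mathbf{i})$ whose value in $[0,1]$ is computed in a world $\omega$ by: a constant evaluates to itself, a ground atom evaluates to $1$ if true in $\omega$ and $0$ otherwise, and $F_1F_2+(1-F_1)F_3$ is evaluated arithmetically. The parents of $r(\mathbf{i})$ are the ground atoms occurring in $F_r(\mathbf{i})$. The RBN is acyclic if for every $n$ this parent relation on ground atoms over $[n]$ is acyclic. Then $Q^{(n)}(\omega)=\prod_{r/k\in S}\prod_{\mathbf{i}\in[n]^k} p_{r,\mathbf{i}}(\omega)$, where $p_{r,\mathbf{i}}(\omega)$ is the value of $F_r(\mathbf{i})$ in $\omega$ if $r(\mathbf{i})$ is true in $\omega$ and one minus this value otherwise (i.e. $Q^{(n)}$ is the Bayesian network on the ground atoms with these parents and conditional probabilities). *)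

From mathcomp Require Import all_boot all_order all_algebra.
From mathcomp Require Import fingroup perm reals.
Set Implicit Arguments. Unset Strict Implicit. Unset Printing Implicit Defensive.
Import Order.TTheory GRing.Theory Num.Theory.
Local Open Scope ring_scope.

Section RBN.
Variable R : realType.
Variables (Rel : finType) (ar : Rel -> nat).

Inductive pform (k : nat) : Type :=
| PConst of R
| PAtom (s : Rel) of (ar s).-tuple 'I_k
| PComb of pform k & pform k & pform k.

Definition atom (n : nat) := {r : Rel & (ar r).-tuple 'I_n}.
Definition world (n : nat) := {ffun atom n -> bool}.

Fixpoint consts_ok k (F : pform k) : bool :=
  match F with
  | PConst q => (0 <= q) && (q <= 1)
  | PAtom _ _ => true
  | PComb F1 F2 F3 => [&& consts_ok F1, consts_ok F2 & consts_ok F3]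
  end.

Definition subst_atom n k (s : Rel) (a : (ar s).-tuple 'I_k) (i : k.-tuple 'I_n)
  : atom n := existT _ s [tuple tnth i (tnth a j) | j < ar s].

Fixpoint gval n k (F : pform k) (i : k.-tuple 'I_n) (w : world n) : R :=
  match F with
  | PConst q => q
  | PAtom s a => if w (subst_atom a i) then 1 else 0
  | PComb F1 F2 F3 => gval F1 i w * gval F2 i w + (1 - gval F1 i w) * gval F3 i w
  end.

Fixpoint gatoms n k (F : pform k) (i : k.-tuple 'I_n) : seq (atom n) :=
  match F with
  | PConst _ => [::]
  | PAtom s a => [:: subst_atom a i]
  | PComb F1 F2 F3 => gatoms F1 i ++ gatoms F2 i ++ gatoms F3 i
  end.

Section Net.
Variable F : forall r : Rel, pform (ar r).

(* b is a parent of a *)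
Definition rbn_parent n (a b : atom n) : bool := b \in gatoms (F (tag a)) (tagged a).

Definition rbn_acyclic : Prop :=
  forall n (a b : atom n), rbn_parent a b -> ~~ connect (@rbn_parent n) b a.

Definition rbn_Q n (w : world n) : R :=
  \prod_(a : atom n)
    (if w a then gval (F (tag a)) (tagged a) w else 1 - gval (F (tag a)) (tagged a) w).
End Net.

Definition is_distr n (P : world n -> R) : Prop :=
  (forall w, 0 <= P w) /\ \sum_(w : world n) P w = 1.

Definition atom_perm n (s : {perm 'I_n}) (a : atom n) : atom n :=
  existT _ (tag a) [tuple s (tnth (tagged a) j) | j < ar (tag a)].

(* the world isomorphic to w via s: w'(r(s i)) = w(r(i)) *)
Definition perm_world n (s : {perm 'I_n}) (w : world n) : world n :=
  [ffun a => w (atom_perm (s^-1)%g a)].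

Definition exchangeable n (P : world n -> R) : Prop :=
  forall (s : {perm 'I_n}) (w : world n), P (perm_world s w) = P w.

Definition atom_widen m n (H : (m <= n)%N) (a : atom m) : atom n :=
  existT _ (tag a) [tuple widen_ord H (tnth (tagged a) j) | j < ar (tag a)].

Definition restrict m n (H : (m <= n)%N) (w : world n) : world m :=
  [ffun a => w (atom_widen H a)].

Definition projective (Q : forall n, world n -> R) : Prop :=
  [/\ forall n, is_distr (Q n),
      forall n, exchangeable (Q n) &
      forall m n (H : (m < n)%N) (wm : world m),
        \sum_(w : world n | restrict (ltnW H) w == wm) Q n w = Q m wm].
End RBN.

(* Q^(n) is a Bayesian network, i.e. a product of conditional distributions
   along an acyclic parent relation; summing out the atoms of any set X of
   nodes, childless node by childless node, therefore gives 1.  Exchangeability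
   holds because substitution commutes with renaming the domain.  For the
   marginals, a ground formula over [m] only mentions atoms over [m], so Q^(n)
   factors as Q^(m) of the restricted world times the factors of the atoms
   outside [m], and the latter sum out to 1. *)

From mathcomp Require Import all_boot all_order all_algebra.
From mathcomp Require Import fingroup perm reals.
Set Implicit Arguments. Unset Strict Implicit. Unset Printing Implicit Defensive.
Import Order.TTheory GRing.Theory Num.Theory.
Local Open Scope ring_scope.

Section BayesNet.
Variables (R : realType) (A : finType).
Implicit Types (X : {set A}) (w : {ffun A -> bool}).

Definition fupd w b x : {ffun A -> bool} := [ffun c => if c == b then x else w c].

Definition agree_off X w0 w := [forall a in ~: X, w a == w0 a].

Lemma big_agree_off_fix (G : {ffun A -> bool} -> R) X w0 b x : b \in X ->
  \sum_(w | agree_off X w0 w && (w b == x)) G w =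
  \sum_(w | agree_off (X :\ b) w0 w) G (fupd w b x).
Proof.
move=> bX.
rewrite (reindex_onto (fun w => fupd w b x) (fun w => fupd w b (w0 b))) /=; last first.
  move=> w /andP[_ /eqP wb]; apply/ffunP => a; rewrite !ffunE.
  by case: eqP => // ->.
apply: eq_bigl => w; apply/idP/idP.
  case/andP=> /andP[/forallP agX _] /eqP <-.
  apply/forallP => a; apply/implyP; rewrite !inE negb_and negbK ffunE.
  case: eqP => [->|_ /= aX]; first by rewrite eqxx.
  by have := agX a; rewrite inE aX.
move/forallP=> agX'.
have wb : w b = w0 b by apply/eqP; have := agX' b; rewrite !inE eqxx.
rewrite ffunE eqxx eqxx andbT; apply/andP; split.
  apply/forallP => a; apply/implyP; rewrite inE ffunE => aX.
  case: (a =P b) => [ab|_]; first by rewrite ab bX in aX.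
  by have := agX' a; rewrite !inE negb_and aX orbT.
by apply/eqP/ffunP => a; rewrite !ffunE; case: eqP => // ->.
Qed.

Lemma big_agree_off_split (G : {ffun A -> bool} -> R) X w0 b : b \in X ->
  \sum_(w | agree_off X w0 w) G w =
  \sum_(w | agree_off (X :\ b) w0 w) (G (fupd w b true) + G (fupd w b false)).
Proof.
move=> bX; rewrite big_split -!big_agree_off_fix // (bigID (fun w => w b)) /=.
by congr (_ + _); apply: eq_bigl => w; case: (w b); rewrite ?andbT ?andbF.
Qed.

Variables (par : rel A) (rank : A -> nat) (p : A -> {ffun A -> bool} -> R).
Hypothesis rank_par : forall a b, par a b -> (rank a < rank b)%N.
Hypothesis p_local : forall a w w', (forall b, par a b -> w b = w' b) -> p a w = p a w'.

Definition bn_factor a w := if w a then p a w else 1 - p a w.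

Lemma p_fupd a b w x : ~~ par a b -> p a (fupd w b x) = p a w.
Proof.
move=> nab; apply: p_local => c ac; rewrite ffunE.
by case: eqP => // cb; rewrite -cb ac in nab.
Qed.

Lemma exists_leaf X : X != set0 -> exists2 b, b \in X & forall a, a \in X -> ~~ par a b.
Proof.
case/set0Pn=> b0 /(arg_minnP rank) [b bX minb].
by exists b => // a aX; apply/negP => /rank_par; rewrite ltnNge minb.
Qed.

Lemma sum_prod_bn_factor X w0 :
  \sum_(w | agree_off X w0 w) \prod_(a in X) bn_factor a w = 1.
Proof.
elim: {X}_.+1 {-2}X (ltnSn #|X|) w0 => // k IHk X ltXk w0.
have [->|/exists_leaf [b bX leafb]] := eqVneq X set0.
  rewrite (eq_bigl (pred1 w0)) ?big_pred1_eq ?big_set0 // => w /=.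
  apply/forallP/eqP => [agw | ->]; last by move=> a; rewrite eqxx implybT.
  by apply/ffunP => a; have := agw a; rewrite setC0 inE => /eqP.
rewrite (big_agree_off_split _ _ bX) -[RHS](IHk (X :\ b) _ w0); last first.
  by move: ltXk; rewrite (cardsD1 b X) bX.
(* b is the parent of no node of X, so only its own factor sees w b. *)
apply: eq_bigr => w _; rewrite !(bigD1 b bX) /=.
have rest x :
    \prod_(a in X | a != b) bn_factor a (fupd w b x) = \prod_(a in X :\ b) bn_factor a w.
  rewrite [RHS](eq_bigl (fun a => (a \in X) && (a != b))) => [|a]; last by rewrite !inE andbC.
  apply: eq_bigr => a /andP[aX ab].
  by rewrite /bn_factor ffunE (negbTE ab) p_fupd ?leafb.
have nbb : ~~ par b b by apply/negP => /rank_par; rewrite ltnn.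
by rewrite !rest /bn_factor !ffunE eqxx !p_fupd // -mulrDl addrC subrK mul1r.
Qed.

End BayesNet.

Section RBNSemantics.
Variables (R : realType) (Rel : finType) (ar : Rel -> nat).
Variable F : forall r : Rel, pform R ar (ar r).

Lemma gval_local n k (G : pform R ar k) (i : k.-tuple 'I_n) (w w' : world ar n) :
  (forall b, b \in gatoms G i -> w b = w' b) -> gval G i w = gval G i w'.
Proof.
elim: G => [q|s a|G1 IH1 G2 IH2 G3 IH3] //= eqw; first by rewrite eqw ?mem_seq1.
by rewrite IH1 ?IH2 ?IH3 // => b bG; apply: eqw; rewrite !mem_cat bG ?orbT.
Qed.

Lemma gval_in01 n k (G : pform R ar k) (i : k.-tuple 'I_n) (w : world ar n) :
  consts_ok G -> 0 <= gval G i w <= 1.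
Proof.
elim: G => [q|s a|G1 IH1 G2 IH2 G3 IH3] //=; first by case: (w _); rewrite lexx ler01.
case/and3P=> /IH1/andP[x0 x1] /IH2/andP[y0 y1] /IH3/andP[z0 z1].
have x1' : 0 <= 1 - gval G1 i w by rewrite subr_ge0.
rewrite addr_ge0 ?mulr_ge0 //=.
by have := lerD (ler_wpM2l x0 y1) (ler_wpM2l x1' z1); rewrite !mulr1 [leRHS]addrC subrK.
Qed.

Lemma gval_perm n k (G : pform R ar k) (i : k.-tuple 'I_n) (w : world ar n)
    (s : {perm 'I_n}) :
  gval G [tuple s (tnth i j) | j < k] (perm_world s w) = gval G i w.
Proof.
elim: G => [q|r a|G1 IH1 G2 IH2 G3 IH3] //=; last by rewrite IH1 IH2 IH3.
rewrite ffunE; congr (if w _ then _ else _); congr existT.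
by apply: eq_from_tnth => j; rewrite !tnth_mktuple permK.
Qed.

Lemma gval_widen m n (H : (m <= n)%N) k (G : pform R ar k) (i : k.-tuple 'I_m)
    (w : world ar n) :
  gval G [tuple widen_ord H (tnth i j) | j < k] w = gval G i (restrict H w).
Proof.
elim: G => [q|r a|G1 IH1 G2 IH2 G3 IH3] //=; last by rewrite IH1 IH2 IH3.
rewrite ffunE; congr (if w _ then _ else _); congr existT.
by apply: eq_from_tnth => j; rewrite !tnth_mktuple.
Qed.

Lemma atom_permK n (s : {perm 'I_n}) : cancel (@atom_perm _ ar n s) (atom_perm s^-1).
Proof.
by case=> r t; congr existT; apply: eq_from_tnth => j; rewrite !tnth_mktuple permK.
Qed.

Lemma atom_permKV n (s : {perm 'I_n}) : cancel (@atom_perm _ ar n s^-1) (atom_perm s).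
Proof.
by case=> r t; congr existT; apply: eq_from_tnth => j; rewrite !tnth_mktuple permKV.
Qed.

Lemma atom_widen_inj m n (H : (m <= n)%N) : injective (@atom_widen _ ar m n H).
Proof.
case=> r t [r' t'] eqa; have /= er := congr1 tag eqa; subst r'.
have eqt := eq_from_Tagged eqa.
congr existT; apply: eq_from_tnth => j.
have := congr1 (fun u : (ar r).-tuple 'I_n => tnth u j) eqt.
by rewrite !tnth_mktuple => -[] /val_inj.
Qed.

Definition rbn_p n (a : atom ar n) (w : world ar n) : R := gval (F (tag a)) (tagged a) w.

Lemma rbn_Q_exchangeable n : exchangeable (@rbn_Q _ _ _ F n).
Proof.
move=> s w; rewrite /rbn_Q (reindex (atom_perm s)); last first.
  by exists (atom_perm s^-1) => a _; [apply: atom_permK | apply: atom_permKV].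
by apply: eq_bigr => a _ /=; rewrite ffunE atom_permK gval_perm.
Qed.

Section Restriction.
Variables (m n : nat) (H : (m <= n)%N).

Definition widened_atoms : {set atom ar n} := [set atom_widen H a | a in [set: atom ar m]].

Definition extend_world (wm : world ar m) : world ar n :=
  [ffun a => [exists a', (atom_widen H a' == a) && wm a']].

Lemma extend_world_widen wm a : extend_world wm (atom_widen H a) = wm a.
Proof.
rewrite ffunE; apply/existsP/idP => [[a' /andP[/eqP/atom_widen_inj -> //]] | wma].
by exists a; rewrite eqxx.
Qed.

Lemma restrict_eqE (w : world ar n) wm :
  (restrict H w == wm) = agree_off (~: widened_atoms) (extend_world wm) w.
Proof.
apply/eqP/forallP => [<- a | agw].
  by apply/implyP; rewrite setCK => /imsetP[a' _ ->]; rewrite extend_world_widen ffunE.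
apply/ffunP => a; rewrite ffunE -extend_world_widen; apply/eqP.
by have := agw (atom_widen H a); rewrite setCK imset_f ?inE.
Qed.

Lemma rbn_Q_restrict (w : world ar n) :
  rbn_Q F w = rbn_Q F (restrict H w) * \prod_(a in ~: widened_atoms) bn_factor (@rbn_p n) a w.
Proof.
rewrite /rbn_Q (bigID (mem widened_atoms)) /=; congr (_ * _); last first.
  by apply: eq_bigl => a; rewrite inE.
rewrite (eq_bigl (mem (atom_widen H @: [set: atom ar m]))) // big_imset /=; last first.
  by move=> a a' _ _; apply: atom_widen_inj.
apply: eq_big => [a | a _]; first by rewrite inE.
by rewrite gval_widen ffunE.
Qed.

End Restriction.

Hypothesis F_consts : forall r, consts_ok (F r).

Lemma rbn_Q_ge0 n (w : world ar n) : 0 <= rbn_Q F w.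
Proof.
apply: prodr_ge0 => a _; have /andP[p0 p1] := gval_in01 (tagged a) w (F_consts (tag a)).
by case: (w a); rewrite ?subr_ge0.
Qed.

Definition rbn_rank n (a : atom ar n) := #|[set c | connect (@rbn_parent _ _ _ F n) c a]|.

Hypothesis F_acyclic : rbn_acyclic F.

Lemma rbn_rank_lt n (a b : atom ar n) : rbn_parent F a b -> (rbn_rank a < rbn_rank b)%N.
Proof.
move=> ab; apply/proper_card/properP; split.
  by apply/subsetP => c; rewrite !inE => /connect_trans; apply; apply: connect1.
by exists b; rewrite !inE ?connect0 // (negbTE (F_acyclic ab)).
Qed.

Lemma sum_prod_rbn_factor n (X : {set atom ar n}) (w0 : world ar n) :
  \sum_(w | agree_off X w0 w) \prod_(a in X) bn_factor (@rbn_p n) a w = 1.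
Proof. by apply: (sum_prod_bn_factor (@rbn_rank_lt n)) => a w w'; apply: gval_local. Qed.

Lemma rbn_Q_sum1 n : \sum_(w : world ar n) rbn_Q F w = 1.
Proof.
rewrite -(sum_prod_rbn_factor [set: atom ar n] [ffun=> false]).
apply: eq_big => [w | w _]; last by apply: eq_bigl => a; rewrite inE.
by apply/esym/forallP => a; rewrite !inE.
Qed.

Lemma rbn_Q_marginal m n (H : (m <= n)%N) (wm : world ar m) :
  \sum_(w : world ar n | restrict H w == wm) rbn_Q F w = rbn_Q F wm.
Proof.
pose rest w := \prod_(a in ~: widened_atoms H) bn_factor (@rbn_p n) a w.
rewrite (eq_bigr (fun w => rbn_Q F wm * rest w)) => [|w /eqP <-]; last exact: rbn_Q_restrict.
by rewrite -mulr_sumr (eq_bigl _ _ (restrict_eqE H ^~ wm)) sum_prod_rbn_factor mulr1.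
Qed.

End RBNSemantics.

Theorem mainTheorem1 (R : realType) (Rel : finType) (ar : Rel -> nat)
    (F : forall r : Rel, pform R ar (ar r)) :
  (forall r, consts_ok (F r)) ->
  rbn_acyclic F ->
  projective (rbn_Q F).
Proof.
move=> F_consts F_acyclic; split=> [n | n | m n H wm].
- by split; [apply: rbn_Q_ge0 | apply: rbn_Q_sum1].
- exact: rbn_Q_exchangeable.
- exact: rbn_Q_marginal.
Qed.
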